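(* Let $\alpha$ be a tame power series and let $\mathbf B_\alpha$ be the Bernoulli operator built from any multi-power series expansion of $(-1)^\nu(\ln z)^\nu\alpha(z)$ as below. Then every polynomial function $P(t)$ lies in $\mathscr D(\mathbf B_\alpha)$ and $\mathbf B_\alpha P=\mathbf T_\alpha P$.
   Context: Let $(a_n)_{n\ge1}$ be complex numbers and $\alpha(z)=\sum_{n\ge0}a_{n+1}z^n$. For $N\ge1$, $\mathbf e\in\mathbb Z_{>0}^N$ let $\lambda_{\mathbf e}(z)=(z^{e_1},\dots,z^{e_N})$; a multi-power series around $1$ is a series $\sum_{\mathbf i\in\mathbb Z_{\ge0}^N}c_{\mathbf i}(\lambda_{\mathbf e}(z)-\mathbf 1)^{\mathbf i}$ with $\mathbf w^{\mathbf i}=\prod_jw_j^{i_j}$. $\alpha$ is tame if (1) it converges on the open unit disk; (2) it extends holomorphically to a punctured neighborhood of $z=1$ with a pole of order $\nu\ge0$ at $1$ ($\nu=0$: holomorphic at $1$); (3) on some open neighborhood of $(0,1]$, $(z-1)^\nu\alpha(z)$ equals a multi-power series around $1$ converging absolutely and uniformly there. For tame $\alpha$, $(-1)^\nu(\ln z)^\nu\alpha(z)$ then also has such an expansion $\sum_{\mathbf i}c_{\mathbf i}(\lambda_{\mathbf e}(z)-\mathbf 1)^{\mathbf i}$ converging absolutely and uniformly on a neighborhood of $(0,1]$; fix one. For functions $g$ on $(0,\infty)$ and $h>0$: $\mathbf E_hg(t)=g(t+h)$, $\Delta_h=\mathbf E_h-\mathrm{id}$, and $\Delta_{\mathbf e}^{\mathbf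 i}=\Delta_{e_1}^{i_1}\cdots\Delta_{e_N}^{i_N}$. The Bernoulli operator is $\mathbf B_\alpha=\sum_{\mathbf i}c_{\mathbf i}\Delta_{\mathbf e}^{\mathbf i}$; its domain $\mathscr D(\mathbf B_\alpha)$ consists of the functions $g:(0,\infty)\to\mathbb C$ for which $\sum_{\mathbf i}c_{\mathbf i}\Delta_{\mathbf e}^{\mathbf i}g(t)$ converges absolutely and locally uniformly in $t$, and $\mathbf B_\alpha g$ is the sum. Todd operator: write the Taylor expansion at $u=0$ of the function $u^\nu\alpha(e^{-u})$ (holomorphic near $u=0$) as $\sum_{k\ge0}b_ku^k$; for a polynomial $P$, $\mathbf T_\alpha P=\sum_{k\ge0}b_k(-1)^kP^{(k)}$ (a finite sum). *)

From Stdlib Require Import Reals List.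
Import ListNotations.
Open Scope R_scope.

Record Cplx := mkC { Re : R; Im : R }.

Definition RtoC (x : R) : Cplx := mkC x 0.
Definition Czero : Cplx := RtoC 0.
Definition Cone : Cplx := RtoC 1.
Definition Cadd (z w : Cplx) : Cplx := mkC (Re z + Re w) (Im z + Im w).
Definition Copp (z : Cplx) : Cplx := mkC (- Re z) (- Im z).
Definition Csub (z w : Cplx) : Cplx := Cadd z (Copp w).
Definition Cmul (z w : Cplx) : Cplx :=
  mkC (Re z * Re w - Im z * Im w) (Re z * Im w + Im z * Re w).
Definition Cinv (z : Cplx) : Cplx :=
  let d := Re z * Re z + Im z * Im z in mkC (Re z / d) (- Im z / d).
Definition Cdiv (z w : Cplx) : Cplx := Cmul z (Cinv w).
Definition Cnorm (z : Cplx) : R := sqrt (Re z * Re z + Im z * Im z).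
Fixpoint Cpow (z : Cplx) (n : nat) : Cplx :=
  match n with O => Cone | S m => Cmul z (Cpow z m) end.

Definition Cexp (z : Cplx) : Cplx := mkC (exp (Re z) * cos (Im z)) (exp (Re z) * sin (Im z)).

(* principal argument in (-PI, PI] and principal logarithm *)
Definition Carg (z : Cplx) : R :=
  if Rlt_dec 0 (Re z) then atan (Im z / Re z)
  else if Rlt_dec (Re z) 0 then
    (if Rle_dec 0 (Im z) then atan (Im z / Re z) + PI else atan (Im z / Re z) - PI)
  else if Rlt_dec 0 (Im z) then PI / 2
  else if Rlt_dec (Im z) 0 then - (PI / 2) else 0.
Definition Cln (z : Cplx) : Cplx := mkC (ln (Cnorm z)) (Carg z).

Definition Cseq_lim (u : nat -> Cplx) (l : Cplx) : Prop :=
  forall eps, 0 < eps -> exists M, forall n, (M <= n)%nat -> Cnorm (Csub (u n) l) < eps.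

(* partial sum f 0 + ... + f (n-1) *)
Fixpoint Cpsum (f : nat -> Cplx) (n : nat) : Cplx :=
  match n with O => Czero | S m => Cadd (Cpsum f m) (f m) end.

Definition Cseries_sum (f : nat -> Cplx) (S : Cplx) : Prop := Cseq_lim (Cpsum f) S.

Definition Cdifferentiable (f : Cplx -> Cplx) (z : Cplx) : Prop :=
  exists l : Cplx, forall eps, 0 < eps -> exists delta, 0 < delta /\
    forall h, 0 < Cnorm h < delta ->
      Cnorm (Csub (Cdiv (Csub (f (Cadd z h)) (f z)) h) l) < eps.

Definition Copen (U : Cplx -> Prop) : Prop :=
  forall z, U z -> exists delta, 0 < delta /\ forall w, Cnorm (Csub w z) < delta -> U w.

Definition nbhd_0_1 (U : Cplx -> Prop) : Prop :=
  Copen U /\ forall x, 0 < x <= 1 -> U (RtoC x).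

(* a multi-index i in Z_{>=0}^N is a list nat of length N *)
Fixpoint boxidx (N M : nat) : list (list nat) :=
  match N with
  | O => [ [] ]
  | S n => flat_map (fun k => map (cons k) (boxidx n M)) (seq 0 (S M))
  end.

Definition CsumL {A} (l : list A) (g : A -> Cplx) : Cplx :=
  fold_right (fun i acc => Cadd (g i) acc) Czero l.
Definition RsumL {A} (l : list A) (g : A -> R) : R :=
  fold_right (fun i acc => g i + acc) 0 l.

(* A multi-series sum_i T i x (i ranging over Z_{>=0}^N) converges absolutely
   and uniformly on W to S: the absolute series has uniformly small tails, and
   the (box) partial sums converge to S x for each x in W. *)
Definition multi_conv_abs_unif {X : Type} (N : nat) (T : list nat -> X -> Cplx)
    (W : X -> Prop) (S : X -> Cplx) : Prop :=
  (forall eps, 0 < eps -> exists M, forall M' x, (M <= M')%nat -> W x ->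
      RsumL (boxidx N M') (fun i => Cnorm (T i x))
      - RsumL (boxidx N M) (fun i => Cnorm (T i x)) < eps)
  /\ (forall x, W x -> Cseq_lim (fun M => CsumL (boxidx N M) (fun i => T i x)) (S x)).

(* (lambda_e(z) - 1)^i = prod_j (z^{e_j} - 1)^{i_j} *)
Definition lam_mono (e i : list nat) (z : Cplx) : Cplx :=
  fold_right (fun p acc => Cmul (Cpow (Csub (Cpow z (fst p)) Cone) (snd p)) acc)
    Cone (combine e i).

Definition exponent_vector (N : nat) (e : list nat) : Prop :=
  (1 <= N)%nat /\ length e = N /\ Forall (fun k => (0 < k)%nat) e.

Definition Ceq_dec (z w : Cplx) : {z = w} + {z <> w}.
Proof.
  destruct z as [x y], w as [x' y'].
  destruct (Req_EM_T x x') as [H1|H1]; destruct (Req_EM_T y y') as [H2|H2].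
  - left; subst; reflexivity.
  - right; intro H; inversion H; contradiction.
  - right; intro H; inversion H; contradiction.
  - right; intro H; inversion H; contradiction.
Defined.

Definition pole_ext (F : Cplx -> Cplx) (nu : nat) (L : Cplx) (z : Cplx) : Cplx :=
  if Ceq_dec z Cone then L else Cmul (Cpow (Csub z Cone) nu) (F z).

(* alpha(z) = sum_{n>=0} a (n+1) z^n ; (a n)_{n>=1}; a 0 is unused. *)
Definition alpha_term (a : nat -> Cplx) (z : Cplx) : nat -> Cplx :=
  fun n => Cmul (a (S n)) (Cpow z n).

Definition in_disk (z : Cplx) : Prop := Cnorm z < 1.
Definition in_ball1 (r : R) (z : Cplx) : Prop := Cnorm (Csub z Cone) < r.

(* tame_data a F nu r L :
   F is the holomorphic extension of alpha to (disk) U (B(1,r) \ {1}),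
   with a pole of order nu at 1: z |-> (z-1)^nu F z extends holomorphically
   to B(1,r) with value L at 1 (L <> 0 when nu > 0);
   and (z-1)^nu alpha(z) is a multi-power series around 1 on a neighbourhood
   of (0,1]. *)
Definition tame_data (a : nat -> Cplx) (F : Cplx -> Cplx) (nu : nat) (r : R) (L : Cplx) : Prop :=
  (forall z, in_disk z -> Cseries_sum (alpha_term a z) (F z)) /\
  0 < r /\
  (forall z, in_ball1 r z -> z <> Cone -> Cdifferentiable F z) /\
  (forall z, in_ball1 r z -> Cdifferentiable (pole_ext F nu L) z) /\
  ((0 < nu)%nat -> L <> Czero) /\
  (exists (U : Cplx -> Prop) (N : nat) (e : list nat) (d : list nat -> Cplx),
      nbhd_0_1 U /\ (forall z, U z -> in_disk z \/ in_ball1 r z) /\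
      exponent_vector N e /\
      multi_conv_abs_unif N (fun i z => Cmul (d i) (lam_mono e i z)) U
        (pole_ext F nu L)).

Definition tame (a : nat -> Cplx) : Prop :=
  exists F nu r L, tame_data a F nu r L.

(* functions on (0,oo) are modelled as R -> Cplx; only values at t > 0 matter *)
Definition Delta (h : R) (g : R -> Cplx) : R -> Cplx := fun t => Csub (g (t + h)) (g t).
Fixpoint Delta_pow (h : R) (n : nat) (g : R -> Cplx) : R -> Cplx :=
  match n with O => g | S m => Delta h (Delta_pow h m g) end.
(* Delta_e^i g = Delta_{e_1}^{i_1} ... Delta_{e_N}^{i_N} g *)
Definition Delta_multi (e i : list nat) (g : R -> Cplx) : R -> Cplx :=
  fold_right (fun p acc => Delta_pow (INR (fst p)) (snd p) acc) g (combine e i).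

(* B_alpha g = Bg : sum_i c_i Delta_e^i g(t) converges absolutely and locally
   uniformly in t in (0,oo), with sum Bg t.  g is in the domain of B_alpha
   iff such Bg exists (it is then unique on (0,oo)). *)
Definition bernoulli_op_value (N : nat) (e : list nat) (c : list nat -> Cplx)
    (g : R -> Cplx) (Bg : R -> Cplx) : Prop :=
  forall t0, 0 < t0 -> exists delta, 0 < delta /\
    multi_conv_abs_unif N (fun i t => Cmul (c i) (Delta_multi e i g t))
      (fun t => 0 < t /\ Rabs (t - t0) < delta) Bg.

Definition in_bernoulli_domain (N : nat) (e : list nat) (c : list nat -> Cplx)
    (g : R -> Cplx) : Prop := exists Bg, bernoulli_op_value N e c g Bg.

(* p = [p_0; p_1; ...] represents sum_k p_k t^k *)
Fixpoint Peval_aux (p : list Cplx) (t : Cplx) : Cplx :=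
  match p with [] => Czero | q :: p' => Cadd q (Cmul t (Peval_aux p' t)) end.
Definition Peval (p : list Cplx) (t : R) : Cplx := Peval_aux p (RtoC t).

Fixpoint Pderiv_aux (p : list Cplx) (k : nat) : list Cplx :=
  match p with [] => [] | q :: p' => Cmul (RtoC (INR k)) q :: Pderiv_aux p' (S k) end.
Definition Pderiv (p : list Cplx) : list Cplx := Pderiv_aux (tl p) 1.
Fixpoint Pderiv_n (n : nat) (p : list Cplx) : list Cplx :=
  match n with O => p | S m => Pderiv (Pderiv_n m p) end.

(* Todd operator: T_alpha P = sum_k b_k (-1)^k P^(k) (finite: P^(k) = 0 for
   k >= length p) *)
Definition todd_op (b : nat -> Cplx) (p : list Cplx) : R -> Cplx :=
  fun t => Cpsum (fun k => Cmul (Cmul (b k) (Cpow (RtoC (-1)) k))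
                                (Peval (Pderiv_n k p) t)) (S (length p)).

Definition taylor_coeffs_at0 (F : Cplx -> Cplx) (nu : nat) (b : nat -> Cplx) : Prop :=
  exists rho, 0 < rho /\ forall u, 0 < Cnorm u < rho ->
    Cseries_sum (fun k => Cmul (b k) (Cpow u k)) (Cmul (Cpow u nu) (F (Cexp (Copp u)))).

(* Taylor's formula gives Delta_e^i P(t) = sum_m P^(m)(t)/m! mu_i(m) with the moments
   mu_i(m) = Delta_e^i (s^m) at 0. The differences act on s |-> exp(-us) as multiplication by
   (lambda_e(exp(-u)) - 1)^i, so the same moments give the Taylor coefficients
   (-1)^m mu_i(m)/m! of u |-> (lambda_e(exp(-u)) - 1)^i = O(u^|i|). Hence mu_i(m) = 0 for
   m < |i|: only the finitely many i with |i| <= deg P contribute, and B_alpha P is a finite sum.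
   Comparing Taylor coefficients at u = 0+ in
   sum_i c_i (lambda_e(exp(-u)) - 1)^i = u^nu alpha(exp(-u)) = sum_k b_k u^k,
   where absolute convergence at z = 1/2 controls the tail in i uniformly, gives
   sum_i c_i (-1)^m mu_i(m)/m! = b_m, which turns B_alpha P into T_alpha P. *)

From Coquelicot Require Import Coquelicot.
From Pilot Require Import Defs.
From Stdlib Require Import Reals List Lra Lia FunctionalExtensionality.
Open Scope R_scope.

(** * Complex arithmetic *)

Lemma Cplx_eq z w : Re z = Re w -> Im z = Im w -> z = w.
Proof. destruct z, w; simpl; intros -> ->; reflexivity. Qed.

Ltac Cplx_unfold := unfold Csub, Cadd, Copp, Cmul, Czero, Cone, RtoC in *.

Lemma Cplx_ring_theory : ring_theory Czero Cone Cadd Cmul Csub Copp (@eq Cplx).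
Proof. constructor; intros; apply Cplx_eq; Cplx_unfold; simpl; ring. Qed.
Add Ring Cplx_ring : Cplx_ring_theory.

Lemma RtoC_plus x y : RtoC (x + y) = Cadd (RtoC x) (RtoC y).
Proof. apply Cplx_eq; Cplx_unfold; simpl; ring. Qed.
Lemma RtoC_mult x y : RtoC (x * y) = Cmul (RtoC x) (RtoC y).
Proof. apply Cplx_eq; Cplx_unfold; simpl; ring. Qed.
Lemma RtoC_minus x y : RtoC (x - y) = Csub (RtoC x) (RtoC y).
Proof. apply Cplx_eq; Cplx_unfold; simpl; ring. Qed.
Lemma Cpow_RtoC x n : Cpow (RtoC x) n = RtoC (x ^ n).
Proof. induction n; simpl; [reflexivity|]. rewrite IHn, RtoC_mult; reflexivity. Qed.
Lemma Re_Cadd z w : Re (Cadd z w) = Re z + Re w.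
Proof. reflexivity. Qed.
Lemma Im_Cadd z w : Im (Cadd z w) = Im z + Im w.
Proof. reflexivity. Qed.
Lemma Re_scal t w : Re (Cmul (RtoC t) w) = t * Re w.
Proof. Cplx_unfold; simpl; ring. Qed.
Lemma Im_scal t w : Im (Cmul (RtoC t) w) = t * Im w.
Proof. Cplx_unfold; simpl; ring. Qed.

(* The norm is Coquelicot's [Cmod] in disguise; its properties are imported from there. *)
Definition to_Coquelicot (z : Cplx) : Complex.C := (Re z, Im z).
Lemma Cnorm_Cmod z : Cnorm z = Cmod (to_Coquelicot z).
Proof. unfold Cnorm, Cmod, to_Coquelicot; simpl; f_equal; ring. Qed.

Lemma Cnorm_ge0 z : 0 <= Cnorm z.
Proof. rewrite Cnorm_Cmod; apply Cmod_ge_0. Qed.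
Lemma Cnorm_triang z w : Cnorm (Cadd z w) <= Cnorm z + Cnorm w.
Proof. rewrite !Cnorm_Cmod; apply (Cmod_triangle (to_Coquelicot z) (to_Coquelicot w)). Qed.
Lemma Cnorm_mul z w : Cnorm (Cmul z w) = Cnorm z * Cnorm w.
Proof. rewrite !Cnorm_Cmod; apply (Cmod_mult (to_Coquelicot z) (to_Coquelicot w)). Qed.
Lemma Cnorm_RtoC x : Cnorm (RtoC x) = Rabs x.
Proof. rewrite Cnorm_Cmod; apply Cmod_R. Qed.
Lemma Cnorm_opp z : Cnorm (Copp z) = Cnorm z.
Proof. unfold Cnorm, Copp; simpl; f_equal; ring. Qed.
Lemma Cnorm_sub_sym z w : Cnorm (Csub z w) = Cnorm (Csub w z).
Proof. replace (Csub z w) with (Copp (Csub w z)) by ring; apply Cnorm_opp. Qed.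
Lemma Cnorm_triang_sub z w : Cnorm (Csub z w) <= Cnorm z + Cnorm w.
Proof. unfold Csub; rewrite <- (Cnorm_opp w); apply Cnorm_triang. Qed.
Lemma Cnorm_sub_triang z w v : Cnorm (Csub z v) <= Cnorm (Csub z w) + Cnorm (Csub w v).
Proof. replace (Csub z v) with (Cadd (Csub z w) (Csub w v)) by ring; apply Cnorm_triang. Qed.
Lemma Cnorm_pow z n : Cnorm (Cpow z n) = Cnorm z ^ n.
Proof.
  induction n; simpl.
  - unfold Cone; rewrite Cnorm_RtoC; apply Rabs_R1.
  - rewrite Cnorm_mul, IHn; reflexivity.
Qed.
Lemma Cnorm_zero : Cnorm Czero = 0.
Proof. unfold Czero; rewrite Cnorm_RtoC; apply Rabs_R0. Qed.
Lemma Cnorm_eq0 z : Cnorm z = 0 -> z = Czero.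
Proof.
  rewrite Cnorm_Cmod; intros H; apply Cmod_eq_0 in H; unfold to_Coquelicot in H.
  injection H; intros; apply Cplx_eq; simpl; auto.
Qed.
Lemma Cnorm_le0 z : Cnorm z <= 0 -> z = Czero.
Proof. intros H; apply Cnorm_eq0; pose proof (Cnorm_ge0 z); lra. Qed.

(** * Finite sums *)

Fixpoint Rpsum (f : nat -> R) (n : nat) : R :=
  match n with O => 0 | S m => Rpsum f m + f m end.

Lemma Cpsum_ext f g n : (forall k, (k < n)%nat -> f k = g k) -> Cpsum f n = Cpsum g n.
Proof. induction n; intros H; simpl; auto. rewrite IHn, H; auto. Qed.
Lemma Cpsum_sub f g n :
  Cpsum (fun k => Csub (f k) (g k)) n = Csub (Cpsum f n) (Cpsum g n).
Proof. induction n; simpl; [ring|]. rewrite IHn; ring. Qed.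
Lemma Cpsum_scal a f n : Cpsum (fun k => Cmul a (f k)) n = Cmul a (Cpsum f n).
Proof. induction n; simpl; [ring|]. rewrite IHn; ring. Qed.
Lemma Cpsum_zero f n : (forall k, (k < n)%nat -> f k = Czero) -> Cpsum f n = Czero.
Proof. induction n; intros H; simpl; auto. rewrite IHn, H by auto; ring. Qed.
Lemma Cpsum_shift f n : Cpsum f (S n) = Cadd (f O) (Cpsum (fun k => f (S k)) n).
Proof. induction n; simpl; [ring|]. simpl in IHn; rewrite IHn; ring. Qed.
Lemma Rpsum_shift f n : Rpsum f (S n) = f O + Rpsum (fun k => f (S k)) n.
Proof. induction n; simpl; [ring|]. simpl in IHn; rewrite IHn; ring. Qed.
Lemma Rpsum_sum_f_R0 f n : Rpsum f (S n) = sum_f_R0 f n.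
Proof. induction n; simpl; [ring|]. simpl in IHn; rewrite <- IHn; reflexivity. Qed.
Lemma Cpsum_norm f n : Cnorm (Cpsum f n) <= Rpsum (fun k => Cnorm (f k)) n.
Proof.
  induction n; simpl.
  - rewrite Cnorm_zero; lra.
  - eapply Rle_trans; [apply Cnorm_triang|lra].
Qed.
Lemma Rpsum_le f g n : (forall k, (k < n)%nat -> f k <= g k) -> Rpsum f n <= Rpsum g n.
Proof.
  induction n; intros H; simpl; [lra|].
  assert (f n <= g n) by auto; assert (Rpsum f n <= Rpsum g n) by auto; lra.
Qed.
Lemma Rpsum_ge0 f n : (forall k, (k < n)%nat -> 0 <= f k) -> 0 <= Rpsum f n.
Proof.
  induction n; intros H; simpl; [lra|].
  assert (0 <= f n) by auto; assert (0 <= Rpsum f n) by auto; lra.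
Qed.
Lemma Cpsum_RtoC f n : Cpsum (fun k => RtoC (f k)) n = RtoC (Rpsum f n).
Proof. induction n; simpl; [reflexivity|]. rewrite IHn, RtoC_plus; reflexivity. Qed.
Lemma Re_Cpsum f n : Re (Cpsum f (S n)) = sum_f_R0 (fun k => Re (f k)) n.
Proof.
  induction n; [simpl; Cplx_unfold; simpl; ring|].
  change (Re (Cadd (Cpsum f (S n)) (f (S n))) = sum_f_R0 (fun k => Re (f k)) n + Re (f (S n))).
  rewrite <- IHn; reflexivity.
Qed.
Lemma Im_Cpsum f n : Im (Cpsum f (S n)) = sum_f_R0 (fun k => Im (f k)) n.
Proof.
  induction n; [simpl; Cplx_unfold; simpl; ring|].
  change (Im (Cadd (Cpsum f (S n)) (f (S n))) = sum_f_R0 (fun k => Im (f k)) n + Im (f (S n))).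
  rewrite <- IHn; reflexivity.
Qed.

Lemma CsumL_cons {A} (a : A) l g : CsumL (a :: l) g = Cadd (g a) (CsumL l g).
Proof. reflexivity. Qed.
Lemma CsumL_app {A} (l1 l2 : list A) g :
  CsumL (l1 ++ l2) g = Cadd (CsumL l1 g) (CsumL l2 g).
Proof. induction l1; simpl; unfold CsumL in *; simpl; [ring|]. rewrite IHl1; ring. Qed.
Lemma CsumL_map {A B} (h : A -> B) l g : CsumL (map h l) g = CsumL l (fun x => g (h x)).
Proof. induction l; auto. cbn [map]; rewrite !CsumL_cons, IHl; auto. Qed.
Lemma CsumL_flat_map {A B} (h : A -> list B) l g :
  CsumL (flat_map h l) g = CsumL l (fun x => CsumL (h x) g).
Proof. induction l; auto. cbn [flat_map]; rewrite CsumL_app, CsumL_cons, IHl; auto. Qed.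
Lemma CsumL_ext {A} (l : list A) f g :
  (forall x, In x l -> f x = g x) -> CsumL l f = CsumL l g.
Proof.
  induction l; intros H; auto.
  rewrite !CsumL_cons, IHl, H; simpl; auto. intros; apply H; simpl; auto.
Qed.
Lemma CsumL_add {A} (l : list A) f g :
  CsumL l (fun x => Cadd (f x) (g x)) = Cadd (CsumL l f) (CsumL l g).
Proof. induction l; [unfold CsumL; simpl; ring|]. rewrite !CsumL_cons, IHl; ring. Qed.
Lemma CsumL_sub {A} (l : list A) f g :
  CsumL l (fun x => Csub (f x) (g x)) = Csub (CsumL l f) (CsumL l g).
Proof. induction l; [unfold CsumL; simpl; ring|]. rewrite !CsumL_cons, IHl; ring. Qed.
Lemma CsumL_scal {A} (l : list A) a f : CsumL l (fun x => Cmul a (f x)) = Cmul a (CsumL l f).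
Proof. induction l; [unfold CsumL; simpl; ring|]. rewrite !CsumL_cons, IHl; ring. Qed.
Lemma CsumL_zero {A} (l : list A) f : (forall x, In x l -> f x = Czero) -> CsumL l f = Czero.
Proof.
  intros H; rewrite (CsumL_ext l f (fun _ => Czero)) by auto; clear H.
  induction l; auto. rewrite CsumL_cons, IHl; ring.
Qed.
Lemma CsumL_Cpsum {A} (l : list A) f n :
  CsumL l (fun x => Cpsum (f x) n) = Cpsum (fun k => CsumL l (fun x => f x k)) n.
Proof. induction n; simpl; [apply CsumL_zero; auto|]. rewrite CsumL_add, IHn; reflexivity. Qed.
Lemma CsumL_norm {A} (l : list A) g : Cnorm (CsumL l g) <= RsumL l (fun x => Cnorm (g x)).
Proof.
  induction l; [unfold CsumL; simpl; rewrite Cnorm_zero; lra|].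
  rewrite CsumL_cons; eapply Rle_trans; [apply Cnorm_triang|simpl; lra].
Qed.

Lemma RsumL_RtoC {A} (l : list A) f : RtoC (RsumL l f) = CsumL l (fun x => RtoC (f x)).
Proof. induction l; [reflexivity|]. rewrite CsumL_cons, <- IHl; simpl; rewrite RtoC_plus; reflexivity. Qed.
Lemma RsumL_le {A} (l : list A) f g :
  (forall x, In x l -> f x <= g x) -> RsumL l f <= RsumL l g.
Proof.
  induction l; intros H; simpl; [lra|].
  assert (f a <= g a) by (apply H; simpl; auto).
  assert (RsumL l f <= RsumL l g) by (apply IHl; intros; apply H; simpl; auto). lra.
Qed.
Lemma RsumL_add {A} (l : list A) f g : RsumL l (fun x => f x + g x) = RsumL l f + RsumL l g.
Proof. induction l; simpl; [ring|]. rewrite IHl; ring. Qed.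
Lemma RsumL_scal_r {A} (l : list A) a f : RsumL l (fun x => f x * a) = RsumL l f * a.
Proof. induction l; simpl; [ring|]. rewrite IHl; ring. Qed.

Lemma boxidx_length N M i : In i (boxidx N M) -> length i = N.
Proof.
  revert i; induction N; intros i H.
  - destruct H as [<-|[]]; reflexivity.
  - apply in_flat_map in H as [k [_ Hk]]. apply in_map_iff in Hk as [j [<- Hj]].
    simpl; rewrite (IHN j Hj); reflexivity.
Qed.

Lemma CsumL_boxidx_le N M0 M (g : list nat -> Cplx) : (M0 <= M)%nat ->
  (forall i, length i = N -> (exists k, In k i /\ (M0 < k)%nat) -> g i = Czero) ->
  CsumL (boxidx N M) g = CsumL (boxidx N M0) g.
Proof.
  revert g; induction N; intros g HM Hg; [reflexivity|].
  cbn [boxidx]; rewrite !CsumL_flat_map.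
  replace (S M) with (S M0 + (M - M0))%nat by lia. rewrite seq_app, CsumL_app.
  rewrite (CsumL_zero (seq (0 + S M0) (M - M0))).
  2:{ intros k Hk. apply in_seq in Hk. apply CsumL_zero. intros x Hx.
      apply in_map_iff in Hx as [j [<- Hj]]. apply Hg.
      - simpl; rewrite (boxidx_length _ _ _ Hj); auto.
      - exists k; split; simpl; auto; lia. }
  replace (Cadd _ Czero) with
    (CsumL (seq 0 (S M0)) (fun x => CsumL (map (cons x) (boxidx N M)) g)) by ring.
  apply CsumL_ext; intros k _; rewrite !CsumL_map. apply IHN; auto.
  intros j Hj [k' [Hk' Hlt]]. apply Hg; simpl; [rewrite Hj; auto|].
  exists k'; split; simpl; auto.
Qed.

Lemma RsumL_boxidx_le N M0 M (g : list nat -> R) : (M0 <= M)%nat ->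
  (forall i, length i = N -> (exists k, In k i /\ (M0 < k)%nat) -> g i = 0) ->
  RsumL (boxidx N M) g = RsumL (boxidx N M0) g.
Proof.
  intros HM Hg. assert (H : forall l : list (list nat), RsumL l g = Re (RtoC (RsumL l g))) by reflexivity.
  rewrite H, (H (boxidx N M0)), !RsumL_RtoC, (CsumL_boxidx_le N M0 M); auto.
  intros; rewrite Hg; auto.
Qed.

(** * Iterated differences *)

(* [Delta_multi e i] and [lam_mono e i] are [Delta_list] and [lam_list] of [combine e i]:
   a list of (step, power) pairs. *)
Definition Delta_list (l : list (nat * nat)) (g : R -> Cplx) : R -> Cplx :=
  fold_right (fun p acc => Delta_pow (INR (fst p)) (snd p) acc) g l.
Definition lam_list (l : list (nat * nat)) (z : Cplx) : Cplx :=
  fold_right (fun p acc => Cmul (Cpow (Csub (Cpow z (fst p)) Cone) (snd p)) acc) Cone l.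
Definition list_order (l : list (nat * nat)) : nat :=
  fold_right (fun p acc => (snd p + acc)%nat) O l.
Definition list_span (l : list (nat * nat)) : R :=
  fold_right (fun p acc => INR (fst p) * INR (snd p) + acc) 0 l.

Section Linearity.
Variable T : (R -> Cplx) -> R -> Cplx.
Hypothesis T_add : forall g1 g2,
  T (fun s => Cadd (g1 s) (g2 s)) = fun s => Cadd (T g1 s) (T g2 s).
Hypothesis T_scal : forall a g, T (fun s => Cmul a (g s)) = fun s => Cmul a (T g s).

Lemma linear_zero : T (fun _ => Czero) = fun _ => Czero.
Proof.
  replace (fun _ : R => Czero) with (fun s : R => Cmul Czero (Czero : Cplx))
    by (apply functional_extensionality; intros; ring).
  rewrite T_scal; apply functional_extensionality; intros; ring.
Qed.

Lemma linear_sub g1 g2 :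
  T (fun s => Csub (g1 s) (g2 s)) = fun s => Csub (T g1 s) (T g2 s).
Proof.
  unfold Csub; rewrite T_add.
  replace (fun s => Copp (g2 s)) with (fun s => Cmul (Copp Cone) (g2 s))
    by (apply functional_extensionality; intros; ring).
  rewrite T_scal; apply functional_extensionality; intros; ring.
Qed.

Lemma linear_Cpsum a g n :
  T (fun s => Cpsum (fun k => Cmul (a k) (g k s)) n)
  = fun s => Cpsum (fun k => Cmul (a k) (T (g k) s)) n.
Proof. induction n; simpl; [apply linear_zero|]. rewrite T_add, IHn, T_scal; reflexivity. Qed.
End Linearity.

Lemma Delta_pow_add h n g1 g2 :
  Delta_pow h n (fun s => Cadd (g1 s) (g2 s))
  = fun s => Cadd (Delta_pow h n g1 s) (Delta_pow h n g2 s).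
Proof.
  induction n; simpl; auto. rewrite IHn; unfold Defs.Delta.
  apply functional_extensionality; intros; ring.
Qed.
Lemma Delta_pow_scal h n a g :
  Delta_pow h n (fun s => Cmul a (g s)) = fun s => Cmul a (Delta_pow h n g s).
Proof.
  induction n; simpl; auto. rewrite IHn; unfold Defs.Delta.
  apply functional_extensionality; intros; ring.
Qed.
Lemma Delta_pow_translate h n c g :
  Delta_pow h n (fun s => g (c + s)) = fun s => Delta_pow h n g (c + s).
Proof.
  induction n; simpl; auto. rewrite IHn; unfold Defs.Delta.
  apply functional_extensionality; intros; rewrite Rplus_assoc; auto.
Qed.

Lemma Delta_list_add l g1 g2 :
  Delta_list l (fun s => Cadd (g1 s) (g2 s))
  = fun s => Cadd (Delta_list l g1 s) (Delta_list l g2 s).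
Proof. induction l; auto. simpl; rewrite IHl, Delta_pow_add; reflexivity. Qed.
Lemma Delta_list_scal l a g :
  Delta_list l (fun s => Cmul a (g s)) = fun s => Cmul a (Delta_list l g s).
Proof. induction l; auto. simpl; rewrite IHl, Delta_pow_scal; reflexivity. Qed.
Lemma Delta_list_translate l c g :
  Delta_list l (fun s => g (c + s)) = fun s => Delta_list l g (c + s).
Proof. induction l; auto. simpl; rewrite IHl, Delta_pow_translate; reflexivity. Qed.

Lemma Delta_pow_bound h n g X B : 0 <= h ->
  (forall s, 0 <= s <= X -> Cnorm (g s) <= B) ->
  forall s, 0 <= s <= X - INR n * h -> Cnorm (Delta_pow h n g s) <= 2 ^ n * B.
Proof.
  intros Hh Hg; induction n; intros s Hs; simpl.
  - rewrite Rmult_1_l; apply Hg; simpl in Hs; lra.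
  - rewrite S_INR in Hs; unfold Defs.Delta. eapply Rle_trans; [apply Cnorm_triang_sub|].
    assert (0 <= INR n) by apply pos_INR.
    assert (Cnorm (Delta_pow h n g (s + h)) <= 2 ^ n * B) by (apply IHn; nra).
    assert (Cnorm (Delta_pow h n g s) <= 2 ^ n * B) by (apply IHn; nra). lra.
Qed.

Lemma Delta_list_bound l g X B : (forall s, 0 <= s <= X -> Cnorm (g s) <= B) ->
  forall s, 0 <= s <= X - list_span l -> Cnorm (Delta_list l g s) <= 2 ^ list_order l * B.
Proof.
  induction l as [|[m n] l IH]; intros Hg s Hs; simpl in *.
  - rewrite Rmult_1_l; apply Hg; lra.
  - rewrite pow_add, Rmult_assoc.
    apply (Delta_pow_bound (INR m) n (Delta_list l g) (X - list_span l));
      [apply pos_INR|intros; apply IH; auto|lra].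
Qed.

(* [Delta_list l g 0] only sees [g] on [[0, list_span l]]. *)
Lemma Delta_list_at0_ext l g1 g2 :
  (forall s, 0 <= s -> g1 s = g2 s) -> Delta_list l g1 0 = Delta_list l g2 0.
Proof.
  intros H.
  assert (Hd : Cnorm (Csub (Delta_list l g1 0) (Delta_list l g2 0)) <= 0).
  { rewrite <- (Rmult_0_r (2 ^ list_order l)).
    assert (Hb := Delta_list_bound l (fun s => Csub (g1 s) (g2 s)) (list_span l) 0).
    rewrite (linear_sub _ (Delta_list_add l) (Delta_list_scal l)) in Hb.
    apply Hb; [|lra]. intros s Hs; rewrite H by lra.
    replace (Csub (g2 s) (g2 s)) with Czero by ring; rewrite Cnorm_zero; lra. }
  apply Cnorm_le0 in Hd.
  replace (Delta_list l g1 0) with (Cadd (Csub (Delta_list l g1 0) (Delta_list l g2 0))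
    (Delta_list l g2 0)) by ring.
  rewrite Hd; ring.
Qed.

Lemma exp_pow_nat x m : exp x ^ m = exp (INR m * x).
Proof.
  induction m; simpl pow; [rewrite Rmult_0_l, exp_0; auto|].
  rewrite IHm, <- exp_plus, S_INR; f_equal; ring.
Qed.

(* This is where [lam_mono] meets the difference operators. *)
Lemma Delta_list_exp l u :
  Delta_list l (fun s => RtoC (exp (- u * s)))
  = fun s => Cmul (lam_list l (RtoC (exp (- u)))) (RtoC (exp (- u * s))).
Proof.
  set (E := fun s => RtoC (exp (- u * s))).
  induction l as [|[m n] l IH]; [apply functional_extensionality; intros; cbn [Delta_list lam_list fold_right]; unfold E; ring|].
  simpl; rewrite IH, Delta_pow_scal; apply functional_extensionality; intros s.
  fold (lam_list l (RtoC (exp (- u)))).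
  assert (Hp : forall k s, Delta_pow (INR m) k E s
      = Cmul (Cpow (Csub (Cpow (RtoC (exp (- u))) m) Cone) k) (E s)).
  { induction k; intros s'; simpl; [ring|]. unfold Defs.Delta; rewrite !IHk.
    unfold E; rewrite Cpow_RtoC, exp_pow_nat.
    replace (- u * (s' + INR m)) with (- u * s' + INR m * - u) by ring.
    rewrite exp_plus, RtoC_mult; ring. }
  rewrite Hp; unfold E; ring.
Qed.

(** * Taylor expansion of polynomials *)

Lemma Peval_Pderiv_aux l j X : Peval_aux (Pderiv_aux l j) X =
  Cadd (Cmul (RtoC (INR j)) (Peval_aux l X)) (Cmul X (Peval_aux (Pderiv l) X)).
Proof.
  revert j; induction l as [|q l IH]; intros j.
  - unfold Pderiv; simpl; Cplx_unfold; apply Cplx_eq; simpl; ring.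
  - unfold Pderiv; cbn [tl Pderiv_aux Peval_aux].
    rewrite IH; fold (Pderiv l); rewrite (IH 1%nat), S_INR, RtoC_plus; simpl INR; ring.
Qed.

Lemma Peval_Pderiv_cons q l X : Peval_aux (Pderiv (q :: l)) X =
  Cadd (Peval_aux l X) (Cmul X (Peval_aux (Pderiv l) X)).
Proof.
  unfold Pderiv at 1; simpl tl; rewrite Peval_Pderiv_aux; simpl INR.
  replace (RtoC 1) with Cone by reflexivity; ring.
Qed.

Lemma Pderiv_n_length p m : length (Pderiv_n m p) = (length p - m)%nat.
Proof.
  assert (Haux : forall l j, length (Pderiv_aux l j) = length l)
    by (induction l; simpl; auto).
  induction m; simpl; [lia|].
  unfold Pderiv; rewrite Haux; destruct (Pderiv_n m p); simpl in *; lia.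
Qed.

Lemma Pderiv_n_nil p : Pderiv_n (S (length p)) p = nil.
Proof. apply length_zero_iff_nil; rewrite Pderiv_n_length; lia. Qed.

(* [Re] and [Im] are handled at once, as real-linear projections. *)
Section RealPart.
Variable pi : Cplx -> R.
Hypothesis pi_add : forall z w, pi (Cadd z w) = pi z + pi w.
Hypothesis pi_scal : forall t w, pi (Cmul (RtoC t) w) = t * pi w.
Hypothesis pi_zero : pi Czero = 0.

Lemma Peval_is_derive p x :
  is_derive (fun t => pi (Peval p t)) x (pi (Peval (Pderiv p) x)).
Proof.
  revert x; induction p as [|q l IH]; intros x.
  - unfold Peval; simpl; rewrite pi_zero; apply (is_derive_const 0).
  - unfold Peval in *; rewrite Peval_Pderiv_cons; cbn [Peval_aux].
    rewrite pi_add, pi_scal.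
    assert (H := is_derive_plus _ _ x _ _ (is_derive_const (pi q) x)
      (is_derive_mult (fun t => t) (fun t => pi (Peval_aux l (RtoC t))) x 1 _
         (is_derive_id x) (IH x) Rmult_comm)).
    replace (pi (Peval_aux l (RtoC x)) + x * pi (Peval_aux (Pderiv l) (RtoC x)))
      with (plus 0 (1 * pi (Peval_aux l (RtoC x)) + x * pi (Peval_aux (Pderiv l) (RtoC x))))
      by (unfold plus; simpl; ring).
    eapply is_derive_ext; [|exact H].
    intros t; simpl; rewrite pi_add, pi_scal; reflexivity.
Qed.

Lemma Peval_Derive_n p m x :
  Derive_n (fun t => pi (Peval p t)) m x = pi (Peval (Pderiv_n m p) x).
Proof.
  revert x; induction m; intros x; simpl; auto.
  rewrite (Derive_ext _ (fun t => pi (Peval (Pderiv_n m p) t))) by auto.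
  apply is_derive_unique, Peval_is_derive.
Qed.

Lemma Peval_ex_derive_n p k x : ex_derive_n (fun t => pi (Peval p t)) k x.
Proof.
  destruct k; simpl; auto.
  apply (ex_derive_ext (fun t => pi (Peval (Pderiv_n k p) t))).
  - intros; symmetry; apply Peval_Derive_n.
  - eexists; apply Peval_is_derive.
Qed.

(* The Lagrange remainder of order [length p + 1] vanishes. *)
Lemma Peval_taylor_proj p t s : 0 < s ->
  pi (Peval p (t + s)) = sum_f_R0 (fun m =>
    s ^ m / INR (Factorial.fact m) * pi (Peval (Pderiv_n m p) t)) (length p).
Proof.
  intros Hs.
  destruct (Taylor_Lagrange (fun x => pi (Peval p x)) (length p) t (t + s))
    as [z [_ Hz]]; [lra|intros; apply Peval_ex_derive_n|].
  rewrite Hz, Peval_Derive_n, Pderiv_n_nil.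
  change (Peval nil z) with Czero; rewrite pi_zero, Rmult_0_r, Rplus_0_r.
  apply sum_eq; intros; rewrite Peval_Derive_n; do 3 f_equal; ring.
Qed.
End RealPart.

Lemma Peval_taylor p t s : 0 <= s ->
  Peval p (t + s) = Cpsum (fun m => Cmul (RtoC (s ^ m / INR (Factorial.fact m)))
                                          (Peval (Pderiv_n m p) t)) (S (length p)).
Proof.
  intros Hs; destruct (Rle_lt_or_eq_dec 0 s Hs) as [Hs'|<-].
  - apply Cplx_eq.
    + rewrite Re_Cpsum, (Peval_taylor_proj Re Re_Cadd Re_scal eq_refl p t s Hs').
      apply sum_eq; intros; rewrite Re_scal; auto.
    + rewrite Im_Cpsum, (Peval_taylor_proj Im Im_Cadd Im_scal eq_refl p t s Hs').
      apply sum_eq; intros; rewrite Im_scal; auto.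
  - rewrite Cpsum_shift, Cpsum_zero.
    + simpl; rewrite Rplus_0_r; unfold Rdiv; rewrite Rinv_1, Rmult_1_l.
      change (RtoC 1) with Cone; ring.
    + intros k _; simpl; rewrite Rmult_0_l; unfold Rdiv; rewrite Rmult_0_l.
      apply Cplx_eq; Cplx_unfold; simpl; ring.
Qed.

(** * Asymptotics as u -> 0+ *)

Definition bigO0 (n : nat) (G : R -> Cplx) : Prop :=
  exists C u1, 0 < u1 /\ forall u, 0 < u <= u1 -> Cnorm (G u) <= C * u ^ n.

Lemma pow_le1 x n : 0 <= x <= 1 -> x ^ n <= 1.
Proof. intros H; rewrite <- (pow1 n); apply pow_incr; lra. Qed.

Lemma Rle_pow_le1 x m n : 0 <= x <= 1 -> (m <= n)%nat -> x ^ n <= x ^ m.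
Proof.
  intros H Hmn; replace n with (m + (n - m))%nat by lia; rewrite pow_add.
  rewrite <- (Rmult_1_r (x ^ m)) at 2.
  apply Rmult_le_compat_l; [apply pow_le; lra|apply pow_le1; lra].
Qed.

Lemma bigO0_nonneg n G : bigO0 n G ->
  exists C u1, 0 <= C /\ 0 < u1 /\ forall u, 0 < u <= u1 -> Cnorm (G u) <= C * u ^ n.
Proof.
  intros [C [u1 [H1 H]]]; exists (Rmax C 0), u1; repeat split; [apply Rmax_r|auto|].
  intros u Hu; eapply Rle_trans; [apply H; auto|].
  apply Rmult_le_compat_r; [apply pow_le; lra|apply Rmax_l].
Qed.

Lemma bigO0_le n F G :
  (exists u0, 0 < u0 /\ forall u, 0 < u <= u0 -> Cnorm (F u) <= Cnorm (G u)) ->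
  bigO0 n G -> bigO0 n F.
Proof.
  intros [u0 [Hu0 Hle]] [C [u1 [Hu1 H]]]; exists C, (Rmin u0 u1).
  split; [apply Rmin_glb_lt; auto|]. intros u Hu.
  assert (u <= u0) by (eapply Rle_trans; [apply Hu|apply Rmin_l]).
  assert (u <= u1) by (eapply Rle_trans; [apply Hu|apply Rmin_r]).
  eapply Rle_trans; [apply Hle; lra|apply H; lra].
Qed.

Lemma bigO0_ext n F G : (forall u, 0 < u -> F u = G u) -> bigO0 n G -> bigO0 n F.
Proof.
  intros E; apply bigO0_le; exists 1; split; [lra|]. intros u Hu; rewrite E by lra; lra.
Qed.

Lemma bigO0_add n F G : bigO0 n F -> bigO0 n G -> bigO0 n (fun u => Cadd (F u) (G u)).
Proof.
  intros HF HG.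
  apply bigO0_nonneg in HF as [C1 [u1 [? [? H1]]]].
  apply bigO0_nonneg in HG as [C2 [u2 [? [? H2]]]].
  exists (C1 + C2), (Rmin u1 u2); split; [apply Rmin_glb_lt; auto|]. intros u Hu.
  assert (u <= u1) by (eapply Rle_trans; [apply Hu|apply Rmin_l]).
  assert (u <= u2) by (eapply Rle_trans; [apply Hu|apply Rmin_r]).
  eapply Rle_trans; [apply Cnorm_triang|].
  specialize (H1 u ltac:(lra)); specialize (H2 u ltac:(lra)); lra.
Qed.

Lemma bigO0_scal n a G : bigO0 n G -> bigO0 n (fun u => Cmul a (G u)).
Proof.
  intros [C [u1 [? H]]]; exists (Cnorm a * C), u1; split; auto. intros u Hu.
  rewrite Cnorm_mul, Rmult_assoc; apply Rmult_le_compat_l; [apply Cnorm_ge0|auto].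
Qed.

Lemma bigO0_sub n F G : bigO0 n F -> bigO0 n G -> bigO0 n (fun u => Csub (F u) (G u)).
Proof.
  intros HF HG.
  apply (bigO0_ext _ _ (fun u => Cadd (F u) (Cmul (Copp Cone) (G u)))); [intros; unfold Csub; ring|].
  apply bigO0_add; [|apply bigO0_scal]; auto.
Qed.

Lemma bigO0_CsumL {A} n (l : list A) G : (forall x, In x l -> bigO0 n (G x)) ->
  bigO0 n (fun u => CsumL l (fun x => G x u)).
Proof.
  induction l as [|a l IHl]; intros Hl.
  - exists 0, 1; split; [lra|]. intros; simpl; rewrite Cnorm_zero; lra.
  - apply (bigO0_add n (G a) (fun u => CsumL l (fun x => G x u))).
    + apply Hl; simpl; auto.
    + apply IHl; intros; apply Hl; simpl; auto.
Qed.

Lemma bigO0_weaken m n G : (m <= n)%nat -> bigO0 n G -> bigO0 m G.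
Proof.
  intros Hmn HG; apply bigO0_nonneg in HG as [C [u1 [HC [Hu1 H]]]].
  exists C, (Rmin u1 1); split; [apply Rmin_glb_lt; lra|]. intros u Hu.
  assert (u <= u1) by (eapply Rle_trans; [apply Hu|apply Rmin_l]).
  assert (u <= 1) by (eapply Rle_trans; [apply Hu|apply Rmin_r]).
  eapply Rle_trans; [apply H; lra|].
  apply Rmult_le_compat_l; auto; apply Rle_pow_le1; [lra|auto].
Qed.

Lemma bigO0_div n H : bigO0 (S n) (fun u => Cmul (RtoC u) (H u)) -> bigO0 n H.
Proof.
  intros [C [u1 [Hu1 HC]]]; exists C, u1; split; auto. intros u Hu.
  specialize (HC u Hu); rewrite Cnorm_mul, Cnorm_RtoC, Rabs_pos_eq in HC by lra.
  simpl in HC; apply (Rmult_le_reg_l u); [lra|nra].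
Qed.

Lemma le_small_multiples x K u1 : 0 < u1 -> 0 <= K ->
  (forall u, 0 < u <= u1 -> x <= u * K) -> x <= 0.
Proof.
  intros Hu1 HK H; destruct (Rle_lt_dec x 0) as [|Hx]; auto.
  set (u := Rmin u1 (x / (2 * (K + 1)))).
  assert (Hu0 : 0 < u) by (apply Rmin_glb_lt; [lra|apply Rdiv_lt_0_compat; lra]).
  assert (Hu : u <= x / (2 * (K + 1))) by apply Rmin_r.
  assert (Hux : u * (2 * (K + 1)) <= x).
  { apply (Rmult_le_compat_r (2 * (K + 1))) in Hu; [|lra].
    unfold Rdiv in Hu; rewrite Rmult_assoc, Rinv_l, Rmult_1_r in Hu by lra; lra. }
  specialize (H u (conj Hu0 (Rmin_l _ _))); nra.
Qed.

(* The constant term of a function [a + u H(u)] with [H] bounded is its limit at [0+]. *)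
Lemma bigO0_1_const a H B : (forall u, 0 < u <= 1 -> Cnorm (H u) <= B) ->
  bigO0 1 (fun u => Cadd a (Cmul (RtoC u) (H u))) -> a = Czero.
Proof.
  intros HB HG; apply bigO0_nonneg in HG as [C [u1 [HC [Hu1 HG]]]].
  assert (HB0 : 0 <= B) by (specialize (HB 1 ltac:(lra)); pose proof (Cnorm_ge0 (H 1)); lra).
  apply Cnorm_le0, (le_small_multiples _ (C + B) (Rmin u1 1)); [apply Rmin_glb_lt; lra|lra|].
  intros u Hu.
  assert (u <= u1) by (eapply Rle_trans; [apply Hu|apply Rmin_l]).
  assert (u <= 1) by (eapply Rle_trans; [apply Hu|apply Rmin_r]).
  replace a with (Csub (Cadd a (Cmul (RtoC u) (H u))) (Cmul (RtoC u) (H u))) by ring.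
  eapply Rle_trans; [apply Cnorm_triang_sub|].
  rewrite Cnorm_mul, Cnorm_RtoC, Rabs_pos_eq by lra.
  specialize (HG u ltac:(lra)); specialize (HB u ltac:(lra)); rewrite pow_1 in HG; nra.
Qed.

Lemma bigO0_poly_coef_eq0 n a :
  bigO0 n (fun u => Cpsum (fun k => Cmul (a k) (RtoC (u ^ k))) n) ->
  forall k, (k < n)%nat -> a k = Czero.
Proof.
  revert a; induction n; intros a Ha k Hk; [lia|].
  set (T := fun u => Cpsum (fun k => Cmul (a (S k)) (RtoC (u ^ k))) n).
  assert (Hsplit : forall u, Cpsum (fun k => Cmul (a k) (RtoC (u ^ k))) (S n)
                             = Cadd (a O) (Cmul (RtoC u) (T u))).
  { intros u; rewrite Cpsum_shift; unfold T; rewrite <- Cpsum_scal.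
    simpl; change (RtoC 1) with Cone; f_equal; [ring|].
    apply Cpsum_ext; intros; simpl; rewrite RtoC_mult; ring. }
  assert (Ha0 : a O = Czero).
  { apply (bigO0_1_const _ T (Rpsum (fun k => Cnorm (a (S k))) n)).
    - intros u Hu; eapply Rle_trans; [apply Cpsum_norm|]. apply Rpsum_le; intros j _.
      rewrite Cnorm_mul, Cnorm_RtoC, Rabs_pos_eq by (apply pow_le; lra).
      rewrite <- (Rmult_1_r (Cnorm (a (S j)))) at 2.
      apply Rmult_le_compat_l; [apply Cnorm_ge0|apply pow_le1; lra].
    - apply (bigO0_weaken 1 (S n)); [lia|]. eapply bigO0_ext; [|exact Ha]; auto. }
  destruct k; auto.
  apply (IHn (fun k => a (S k))); [|lia]. apply bigO0_div.
  eapply bigO0_ext; [|exact Ha]. intros u _; cbv beta; rewrite Hsplit, Ha0; unfold T; ring.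
Qed.

Lemma Cseq_lim_dist_le v l X B : Cseq_lim v l ->
  (exists M1, forall M, (M1 <= M)%nat -> Cnorm (Csub (v M) X) <= B) ->
  Cnorm (Csub l X) <= B.
Proof.
  intros Hl [M1 HM]; destruct (Rle_lt_dec (Cnorm (Csub l X)) B) as [|Hlt]; auto; exfalso.
  destruct (Hl (Cnorm (Csub l X) - B)) as [M2 HM2]; [lra|].
  specialize (HM (max M1 M2) ltac:(lia)); specialize (HM2 (max M1 M2) ltac:(lia)).
  pose proof (Cnorm_sub_triang l (v (max M1 M2)) X) as H3.
  rewrite (Cnorm_sub_sym l (v _)) in H3; lra.
Qed.

Lemma Rpsum_zero f n : (forall k, (k < n)%nat -> f k = 0) -> Rpsum f n = 0.
Proof. induction n; intros H; simpl; auto. rewrite IHn, H by auto; ring. Qed.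

Lemma Rpsum_term_le f n k : (forall j, 0 <= f j) -> (k < n)%nat -> f k <= Rpsum f n.
Proof.
  intros Hf Hk; induction n; [lia|]; simpl.
  destruct (Nat.eq_dec k n) as [->|].
  - assert (0 <= Rpsum f n) by (apply Rpsum_ge0; auto); lra.
  - assert (f k <= Rpsum f n) by (apply IHn; lia); specialize (Hf n); lra.
Qed.

Lemma Cseries_terms_bounded g l : Cseries_sum g l ->
  exists B, 0 <= B /\ forall k, Cnorm (g k) <= B.
Proof.
  intros Hl; destruct (Hl 1) as [M HM]; [lra|].
  set (S0 := Rpsum (fun k => Cnorm (g k)) M).
  assert (HS0 : 0 <= S0) by (apply Rpsum_ge0; intros; apply Cnorm_ge0).
  assert (Hhead : forall k, (k < M)%nat -> Cnorm (g k) <= S0)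
    by (intros; apply (Rpsum_term_le (fun k => Cnorm (g k))); auto; intros; apply Cnorm_ge0).
  exists (2 + S0); split; [lra|]. intros k.
  destruct (Compare_dec.le_lt_dec M k) as [Hk|Hk]; [|specialize (Hhead k Hk); lra].
  replace (g k) with (Csub (Csub (Cpsum g (S k)) l) (Csub (Cpsum g k) l)) by (simpl; ring).
  eapply Rle_trans; [apply Cnorm_triang_sub|].
  pose proof (HM (S k) ltac:(lia)); pose proof (HM k Hk); lra.
Qed.

Lemma Cpsum_geom_tail f B r n : 0 <= B -> 0 <= r <= 1/2 ->
  (forall k, Cnorm (f k) <= B * r ^ k) ->
  forall M, (n <= M)%nat -> Cnorm (Csub (Cpsum f M) (Cpsum f n)) <= 2 * B * r ^ n - 2 * B * r ^ M.
Proof.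
  intros HB Hr Hf M HM; induction HM as [|M HM IH].
  - replace (Csub (Cpsum f n) (Cpsum f n)) with Czero by ring; rewrite Cnorm_zero; lra.
  - replace (Csub (Cpsum f (S M)) (Cpsum f n))
      with (Cadd (Csub (Cpsum f M) (Cpsum f n)) (f M)) by (simpl; ring).
    eapply Rle_trans; [apply Cnorm_triang|]. specialize (Hf M).
    assert (0 <= B * r ^ M) by (apply Rmult_le_pos; auto; apply pow_le; lra).
    simpl; nra.
Qed.

Lemma power_series_bigO0 (b : nat -> Cplx) rho Phi n : 0 < rho ->
  (forall u, 0 < Cnorm u < rho -> Cseries_sum (fun k => Cmul (b k) (Cpow u k)) (Phi u)) ->
  bigO0 n (fun u => Csub (Phi (RtoC u)) (Cpsum (fun k => Cmul (b k) (Cpow (RtoC u) k)) n)).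
Proof.
  intros Hrho Hs; set (u0 := rho / 2).
  assert (Hu0 : 0 < u0) by (unfold u0; lra).
  destruct (Cseries_terms_bounded (fun k => Cmul (b k) (Cpow (RtoC u0) k)) (Phi (RtoC u0)))
    as [B [HB0 HB]].
  { apply Hs; rewrite Cnorm_RtoC, Rabs_pos_eq; unfold u0; lra. }
  exists (2 * B / u0 ^ n), (u0 / 2); split; [lra|]. intros u Hu.
  set (r := u / u0).
  assert (Hr : 0 <= r <= 1/2).
  { unfold r; split; [apply Rdiv_le_0_compat; lra|].
    apply (Rmult_le_reg_r u0); auto; unfold Rdiv; rewrite Rmult_assoc, Rinv_l, Rmult_1_r; lra. }
  assert (Hf : forall k, Cnorm (Cmul (b k) (Cpow (RtoC u) k)) <= B * r ^ k).
  { intros k; specialize (HB k); rewrite Cnorm_mul, Cpow_RtoC, Cnorm_RtoC in *.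
    rewrite Rabs_pos_eq in * by (apply pow_le; lra).
    replace u with (u0 * r) by (unfold r; field; lra); rewrite Rpow_mult_distr.
    assert (0 <= r ^ k) by (apply pow_le; lra).
    replace (Cnorm (b k) * (u0 ^ k * r ^ k)) with ((Cnorm (b k) * u0 ^ k) * r ^ k) by ring.
    apply Rmult_le_compat_r; auto. }
  apply Rle_trans with (2 * B * r ^ n).
  - apply (Cseq_lim_dist_le (Cpsum (fun k => Cmul (b k) (Cpow (RtoC u) k)))).
    + apply Hs; rewrite Cnorm_RtoC, Rabs_pos_eq; unfold u0 in *; lra.
    + exists n; intros M HM; eapply Rle_trans; [apply (Cpsum_geom_tail _ B r n); auto|].
      assert (0 <= 2 * B * r ^ M) by (apply Rmult_le_pos; [lra|apply pow_le; lra]); lra.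
  - unfold r, Rdiv; rewrite Rpow_mult_distr, pow_inv; right; field; apply pow_nonzero; lra.
Qed.

Lemma Derive_n_exp_neg m y : Derive_n (fun x => exp (- x)) m y = (-1) ^ m * exp (- y).
Proof.
  revert y; induction m; intros y; simpl; [ring|].
  rewrite (Derive_ext _ (fun x => (-1) ^ m * exp (- x))) by auto.
  apply is_derive_unique; auto_derive; auto; ring.
Qed.

Lemma exp_neg_taylor_lagrange x n : 0 < x -> exists z, 0 < z < x /\
  exp (- x) - Rpsum (fun k => (- x) ^ k / INR (Factorial.fact k)) (S n)
  = x ^ S n / INR (Factorial.fact (S n)) * ((-1) ^ S n * exp (- z)).
Proof.
  intros Hx; destruct (Taylor_Lagrange (fun y => exp (- y)) n 0 x Hx) as [z [Hz E]].
  { intros t _ k _; destruct k; simpl; auto.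
    apply (ex_derive_ext (fun y => (-1) ^ k * exp (- y))).
    - intros; symmetry; apply Derive_n_exp_neg.
    - auto_derive; auto. }
  exists z; split; [lra|]. cbv beta in E; rewrite E, Rpsum_sum_f_R0, Derive_n_exp_neg, Rminus_0_r.
  replace (sum_f_R0 (fun m => x ^ m / INR (Factorial.fact m)
                              * Derive_n (fun y => exp (- y)) m 0) n)
    with (sum_f_R0 (fun k => (- x) ^ k / INR (Factorial.fact k)) n); [ring|].
  apply sum_eq; intros; rewrite Derive_n_exp_neg, Ropp_0, exp_0.
  replace (- x) with ((-1) * x) by ring; rewrite Rpow_mult_distr; field; apply INR_fact_neq_0.
Qed.

Lemma exp_neg_taylor_rem x n : 0 <= x ->
  Rabs (exp (- x) - Rpsum (fun k => (- x) ^ k / INR (Factorial.fact k)) n) <= x ^ n.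
Proof.
  intros Hx; destruct (Rle_lt_or_eq_dec 0 x Hx) as [Hx'|<-].
  2:{ rewrite Ropp_0, exp_0; destruct n as [|n].
      - simpl; rewrite Rminus_0_r, Rabs_R1; lra.
      - rewrite Rpsum_shift, Rpsum_zero.
        + simpl; unfold Rdiv; rewrite Rinv_1; replace (1 - (1 * 1 + 0)) with 0 by ring.
          rewrite Rabs_R0, Rmult_0_l; lra.
        + intros; simpl; unfold Rdiv; ring. }
  destruct n as [|n].
  { assert (exp (- x) <= 1) by (rewrite <- exp_0; left; apply exp_increasing; lra).
    simpl; rewrite Rminus_0_r, Rabs_pos_eq; pose proof (exp_pos (- x)); lra. }
  destruct (exp_neg_taylor_lagrange x n Hx') as [z [Hz ->]].
  unfold Rdiv; rewrite !Rabs_mult, pow_1_abs, Rmult_1_l.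
  rewrite Rabs_pos_eq by (apply pow_le; lra).
  rewrite Rabs_pos_eq by (left; apply Rinv_0_lt_compat, INR_fact_lt_0).
  rewrite Rabs_pos_eq by (left; apply exp_pos).
  assert (exp (- z) <= 1) by (rewrite <- exp_0; left; apply exp_increasing; lra).
  assert (/ INR (Factorial.fact (S n)) <= 1).
  { rewrite <- Rinv_1; apply Rinv_le_contravar; [lra|apply (le_INR 1), Factorial.lt_O_fact]. }
  assert (0 <= x ^ S n) by (apply pow_le; lra).
  assert (0 < / INR (Factorial.fact (S n))) by (apply Rinv_0_lt_compat, INR_fact_lt_0).
  pose proof (exp_pos (- z)).
  apply Rle_trans with (x ^ S n * 1 * 1); [|lra].
  apply Rmult_le_compat; try nra; apply Rmult_le_compat; lra.
Qed.

(** * Moments of iterated differences *)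

(* [lam_coef l k] is the [k]-th Taylor coefficient of [u |-> lam_list l (exp (-u))]. *)
Definition moment (l : list (nat * nat)) (k : nat) : Cplx :=
  Delta_list l (fun s => RtoC (s ^ k)) 0.
Definition exp_coef (k : nat) : R := (-1) ^ k / INR (Factorial.fact k).
Definition lam_coef (l : list (nat * nat)) (k : nat) : Cplx :=
  Cmul (RtoC (exp_coef k)) (moment l k).

Lemma exp_coef_neq0 k : exp_coef k <> 0.
Proof.
  unfold exp_coef; apply Rmult_integral_contrapositive; split;
    [apply pow_nonzero; lra|apply Rinv_neq_0_compat, INR_fact_neq_0].
Qed.

Lemma moment_lam_coef l k : moment l k = Cmul (RtoC (/ exp_coef k)) (lam_coef l k).
Proof.
  unfold lam_coef.
  replace (Cmul (RtoC (/ exp_coef k)) (Cmul (RtoC (exp_coef k)) (moment l k)))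
    with (Cmul (RtoC (/ exp_coef k * exp_coef k)) (moment l k)) by (rewrite RtoC_mult; ring).
  rewrite Rinv_l by apply exp_coef_neq0; change (RtoC 1) with Cone; ring.
Qed.

Lemma Delta_list_Peval l p t : Delta_list l (Peval p) t =
  Cpsum (fun m => Cmul (Cmul (RtoC (/ INR (Factorial.fact m))) (Peval (Pderiv_n m p) t))
                       (moment l m)) (S (length p)).
Proof.
  replace t with (t + 0) at 1 by ring.
  change (Delta_list l (Peval p) (t + 0)) with ((fun s => Delta_list l (Peval p) (t + s)) 0).
  rewrite <- Delta_list_translate.
  rewrite (Delta_list_at0_ext l _ (fun s => Cpsum (fun m =>
      Cmul (Cmul (RtoC (/ INR (Factorial.fact m))) (Peval (Pderiv_n m p) t)) (RtoC (s ^ m)))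
      (S (length p)))).
  - rewrite (linear_Cpsum _ (Delta_list_add l) (Delta_list_scal l)); reflexivity.
  - intros s Hs; rewrite Peval_taylor by auto; apply Cpsum_ext; intros m _.
    unfold Rdiv; rewrite RtoC_mult; ring.
Qed.

Lemma lam_list_exp_taylor l n : bigO0 n (fun u =>
  Csub (lam_list l (RtoC (exp (- u)))) (Cpsum (fun k => Cmul (lam_coef l k) (RtoC (u ^ k))) n)).
Proof.
  exists (2 ^ list_order l * list_span l ^ n), 1; split; [lra|]. intros u Hu.
  set (E := fun s => RtoC (exp (- u * s))).
  set (T := fun s => Cpsum (fun k =>
              Cmul (RtoC ((- u) ^ k / INR (Factorial.fact k))) (RtoC (s ^ k))) n).
  assert (HE : lam_list l (RtoC (exp (- u))) = Delta_list l E 0).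
  { unfold E; rewrite Delta_list_exp, Rmult_0_r, exp_0; change (RtoC 1) with Cone; ring. }
  assert (HT : Cpsum (fun k => Cmul (lam_coef l k) (RtoC (u ^ k))) n = Delta_list l T 0).
  { unfold T; rewrite (linear_Cpsum _ (Delta_list_add l) (Delta_list_scal l)).
    apply Cpsum_ext; intros k _; unfold lam_coef, exp_coef, moment.
    replace ((- u) ^ k / INR (Factorial.fact k))
      with ((-1) ^ k / INR (Factorial.fact k) * u ^ k).
    - rewrite RtoC_mult; ring.
    - replace (- u) with (-1 * u) by ring; rewrite Rpow_mult_distr; field; apply INR_fact_neq_0. }
  rewrite HE, HT.
  change (Csub (Delta_list l E 0) (Delta_list l T 0))
    with ((fun s => Csub (Delta_list l E s) (Delta_list l T s)) 0).
  rewrite <- (linear_sub _ (Delta_list_add l) (Delta_list_scal l)).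
  rewrite Rmult_assoc, <- Rpow_mult_distr.
  apply (Delta_list_bound l _ (list_span l)); [|lra].
  intros s Hs; unfold E, T.
  rewrite (Cpsum_ext _ (fun k => RtoC ((- (u * s)) ^ k / INR (Factorial.fact k)))).
  - rewrite Cpsum_RtoC, <- RtoC_minus, Cnorm_RtoC.
    replace (- u * s) with (- (u * s)) by ring.
    eapply Rle_trans; [apply exp_neg_taylor_rem; nra|apply pow_incr; split; nra].
  - intros k _; rewrite <- RtoC_mult; f_equal.
    replace (- (u * s)) with (- u * s) by ring; rewrite Rpow_mult_distr; field.
    apply INR_fact_neq_0.
Qed.

Lemma lam_list_exp_le l u E : 0 < u ->
  Forall (fun p => (1 <= fst p)%nat /\ INR (fst p) <= E) l ->
  Cnorm (lam_list l (RtoC (exp (- u)))) <= (u * E) ^ list_order l.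
Proof.
  intros Hu; induction l as [|[m n] l IH]; intros HF.
  - simpl; unfold Cone; rewrite Cnorm_RtoC, Rabs_R1; lra.
  - inversion HF as [|? ? [Hm HE] HF']; subst; simpl in *.
    fold (lam_list l (RtoC (exp (- u)))); rewrite Cnorm_mul, Cnorm_pow, pow_add.
    apply Rmult_le_compat; [apply pow_le, Cnorm_ge0|apply Cnorm_ge0| |apply IH; auto].
    apply pow_incr; split; [apply Cnorm_ge0|].
    rewrite Cpow_RtoC; unfold Cone; rewrite <- RtoC_minus, Cnorm_RtoC, exp_pow_nat.
    assert (1 <= INR m) by (apply (le_INR 1); auto).
    assert (1 + (INR m * - u) < exp (INR m * - u)) by (apply exp_ineq1; nra).
    assert (exp (INR m * - u) < 1) by (rewrite <- exp_0; apply exp_increasing; nra).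
    rewrite Rabs_left by lra; nra.
Qed.

Lemma lam_list_half_ge l : Forall (fun p => (1 <= fst p)%nat) l ->
  (1/2) ^ list_order l <= Cnorm (lam_list l (RtoC (1/2))).
Proof.
  induction l as [|[m n] l IH]; intros HF.
  - simpl; unfold Cone; rewrite Cnorm_RtoC, Rabs_R1; lra.
  - inversion HF as [|? ? Hm HF']; subst; simpl in *.
    fold (lam_list l (RtoC (1/2))); rewrite Cnorm_mul, Cnorm_pow, pow_add.
    apply Rmult_le_compat; [apply pow_le; lra|apply pow_le; lra| |apply IH; auto].
    apply pow_incr; split; [lra|].
    rewrite Cpow_RtoC; unfold Cone; rewrite <- RtoC_minus, Cnorm_RtoC.
    assert ((1/2) ^ m <= 1/2)
      by (rewrite <- (pow_1 (1/2)) at 2; apply (Rle_pow_le1 (1/2) 1 m); [lra|auto]).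
    assert (0 < (1/2) ^ m) by (apply pow_lt; lra).
    rewrite Rabs_left by lra; lra.
Qed.

(* Since [lam_list l (exp (-u)) = O(u^|l|)], its Taylor coefficients below [|l|] vanish;
   equivalently, [moment l k = 0] for [k < list_order l]. *)
Lemma lam_coef_low l E k : Forall (fun p => (1 <= fst p)%nat /\ INR (fst p) <= E) l ->
  (k < list_order l)%nat -> lam_coef l k = Czero.
Proof.
  intros HF Hk; apply (bigO0_poly_coef_eq0 (S k) (lam_coef l)); [|lia].
  assert (HL : bigO0 (S k) (fun u => lam_list l (RtoC (exp (- u))))).
  { assert (HE : 0 <= E).
    { destruct l as [|p l]; [simpl in Hk; lia|]. inversion HF as [|? ? [_ HpE]]; subst.
      pose proof (pos_INR (fst p)); lra. }
    exists (E ^ list_order l), 1; split; [lra|]. intros u Hu.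
    eapply Rle_trans; [apply (lam_list_exp_le l u E); auto; lra|].
    rewrite Rpow_mult_distr, Rmult_comm; apply Rmult_le_compat_l; [apply pow_le; auto|].
    apply Rle_pow_le1; [lra|lia]. }
  apply (bigO0_ext _ _ (fun u => Csub (lam_list l (RtoC (exp (- u))))
    (Csub (lam_list l (RtoC (exp (- u))))
          (Cpsum (fun j => Cmul (lam_coef l j) (RtoC (u ^ j))) (S k))))); [intros; ring|].
  apply bigO0_sub; [exact HL|apply lam_list_exp_taylor].
Qed.

Lemma lam_list_exp_le_half l E D u : 0 < u -> 0 <= E -> 2 * u * E <= 1 ->
  Forall (fun p => (1 <= fst p)%nat /\ INR (fst p) <= E) l -> (D <= list_order l)%nat ->
  Cnorm (lam_list l (RtoC (exp (- u)))) <= Cnorm (lam_list l (RtoC (1/2))) * (2 * u * E) ^ D.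
Proof.
  intros Hu HE HuE HF HD.
  assert (Hhalf := lam_list_half_ge l (Forall_impl _ (fun p Hp => proj1 Hp) HF)).
  eapply Rle_trans; [apply (lam_list_exp_le l u E Hu HF)|].
  replace ((u * E) ^ list_order l)
    with ((2 * u * E) ^ list_order l * (1/2) ^ list_order l)
    by (rewrite <- Rpow_mult_distr; f_equal; field).
  assert (0 <= 2 * u * E) by (apply Rmult_le_pos; lra).
  assert ((2 * u * E) ^ list_order l <= (2 * u * E) ^ D) by (apply Rle_pow_le1; [lra|lia]).
  assert (0 <= (2 * u * E) ^ list_order l) by (apply pow_le; lra).
  assert (0 <= (1/2) ^ list_order l) by (apply pow_le; lra).
  rewrite Rmult_comm; apply Rmult_le_compat; auto.
Qed.

(** * Matching Taylor coefficients *)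

Lemma le_list_sum k i : In k i -> (k <= list_sum i)%nat.
Proof. induction i; simpl; intros H; [destruct H|]. destruct H as [->|H]; [lia|specialize (IHi H); lia]. Qed.

Lemma list_order_combine e i : (length i <= length e)%nat -> list_order (combine e i) = list_sum i.
Proof.
  revert e; induction i; intros e H; destruct e; simpl in *; auto; [lia|].
  rewrite <- (IHi e) by lia; reflexivity.
Qed.

Lemma Forall_combine_fst (P : nat -> Prop) e (i : list nat) :
  Forall P e -> Forall (fun p : nat * nat => P (fst p)) (combine e i).
Proof.
  revert i; induction e; intros i H; destruct i; simpl; auto.
  inversion H; subst; constructor; auto.
Qed.

Section Expansion.
Variables (N : nat) (e : list nat) (c : list nat -> Cplx) (W : Cplx -> Prop) (K : Cplx -> Cplx).
Hypothesis e_exponents : exponent_vector N e.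
Hypothesis W_nbhd : nbhd_0_1 W.
Hypothesis K_expansion : multi_conv_abs_unif N (fun i z => Cmul (c i) (lam_mono e i z)) W K.

Definition e_max : R := INR (list_sum e).

(* The coefficient of [u^k] in [sum_i c_i (lambda_e(exp(-u)) - 1)^i], read on the box
   [boxidx N D]; for [k < D] no multi-index outside the box contributes. *)
Definition expansion_coef (D k : nat) : Cplx :=
  CsumL (boxidx N D) (fun i => Cmul (c i) (lam_coef (combine e i) k)).

Lemma combine_steps_bounded i :
  Forall (fun p : nat * nat => (1 <= fst p)%nat /\ INR (fst p) <= e_max) (combine e i).
Proof.
  destruct e_exponents as [_ [_ Hpos]].
  apply (Forall_combine_fst (fun k => (1 <= k)%nat /\ INR k <= e_max)).
  apply Forall_forall; intros x Hx; rewrite Forall_forall in Hpos; split; [apply Hpos; auto|].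
  apply le_INR, le_list_sum; auto.
Qed.

Lemma order_combine i : length i = N -> list_order (combine e i) = list_sum i.
Proof. intros Hl; apply list_order_combine; destruct e_exponents as [_ [He _]]; lia. Qed.

Lemma lam_coef_combine_low i k : length i = N -> (k < list_sum i)%nat ->
  lam_coef (combine e i) k = Czero.
Proof.
  intros Hl Hk; apply (lam_coef_low _ e_max); [apply combine_steps_bounded|].
  rewrite order_combine; auto.
Qed.

Lemma expansion_coef_series D u :
  Cpsum (fun k => Cmul (expansion_coef D k) (RtoC (u ^ k))) D =
  CsumL (boxidx N D) (fun i =>
    Cmul (c i) (Cpsum (fun k => Cmul (lam_coef (combine e i) k) (RtoC (u ^ k))) D)).
Proof.
  rewrite (CsumL_ext _ _ (fun i => Cpsum (fun k =>
     Cmul (c i) (Cmul (lam_coef (combine e i) k) (RtoC (u ^ k)))) D))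
    by (intros; rewrite Cpsum_scal; auto).
  rewrite CsumL_Cpsum; apply Cpsum_ext; intros k _.
  rewrite (CsumL_ext _ _ (fun i => Cmul (RtoC (u ^ k)) (Cmul (c i) (lam_coef (combine e i) k))))
    by (intros; ring).
  rewrite CsumL_scal; unfold expansion_coef; ring.
Qed.

Lemma abs_sums_half_bounded : exists A M0, forall M, (M0 <= M)%nat ->
  RsumL (boxidx N M) (fun i => Cnorm (Cmul (c i) (lam_mono e i (RtoC (1/2))))) <= A.
Proof.
  destruct K_expansion as [Htail _]; destruct (Htail 1) as [M0 HM0]; [lra|].
  exists (RsumL (boxidx N M0) (fun i => Cnorm (Cmul (c i) (lam_mono e i (RtoC (1/2))))) + 1), M0.
  intros M HM; specialize (HM0 M (RtoC (1/2)) HM ltac:(apply W_nbhd; lra)); lra.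
Qed.

Definition taylor_defect (D : nat) (i : list nat) (u : R) : Cplx :=
  Cmul (c i) (Csub (lam_mono e i (RtoC (exp (- u))))
                   (Cpsum (fun k => Cmul (lam_coef (combine e i) k) (RtoC (u ^ k))) D)).

Lemma taylor_defect_high D i u : length i = N -> (D <= list_sum i)%nat ->
  0 < u -> 2 * u * e_max <= 1 ->
  Cnorm (taylor_defect D i u) <= Cnorm (Cmul (c i) (lam_mono e i (RtoC (1/2)))) * (2 * u * e_max) ^ D.
Proof.
  intros Hl HD Hu HuE; unfold taylor_defect.
  rewrite Cpsum_zero by (intros j Hj; rewrite lam_coef_combine_low by (auto; lia); ring).
  replace (Csub (lam_mono e i (RtoC (exp (- u)))) Czero) with (lam_mono e i (RtoC (exp (- u))))
    by ring.
  rewrite !Cnorm_mul, Rmult_assoc; apply Rmult_le_compat_l; [apply Cnorm_ge0|].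
  apply lam_list_exp_le_half; auto; [apply pos_INR|apply combine_steps_bounded|].
  rewrite order_combine; auto.
Qed.

Lemma taylor_defect_box_bigO0 D :
  bigO0 D (fun u => RtoC (RsumL (boxidx N D) (fun i => Cnorm (taylor_defect D i u)))).
Proof.
  apply (bigO0_ext _ _ (fun u => CsumL (boxidx N D) (fun i => RtoC (Cnorm (taylor_defect D i u)))));
    [intros; apply RsumL_RtoC|].
  apply bigO0_CsumL; intros i _; apply (bigO0_le _ _ (taylor_defect D i)).
  - exists 1; split; [lra|]; intros; rewrite Cnorm_RtoC, Rabs_pos_eq; [lra|apply Cnorm_ge0].
  - apply bigO0_scal, lam_list_exp_taylor.
Qed.

Lemma partial_expansion_defect D M u : (D <= M)%nat ->
  Csub (CsumL (boxidx N M) (fun i => Cmul (c i) (lam_mono e i (RtoC (exp (- u))))))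
       (Cpsum (fun k => Cmul (expansion_coef D k) (RtoC (u ^ k))) D)
  = CsumL (boxidx N M) (fun i => taylor_defect D i u).
Proof.
  intros HDM; rewrite expansion_coef_series.
  rewrite <- (CsumL_boxidx_le N D M (fun i => Cmul (c i)
    (Cpsum (fun k => Cmul (lam_coef (combine e i) k) (RtoC (u ^ k))) D))); auto.
  - rewrite <- CsumL_sub; apply CsumL_ext; intros; unfold taylor_defect; ring.
  - intros i Hl [k [Hk Hlt]]; pose proof (le_list_sum k i Hk).
    rewrite Cpsum_zero; [ring|]. intros j Hj; rewrite lam_coef_combine_low by (auto; lia); ring.
Qed.

Lemma taylor_defect_sum_le A D M u : (D <= M)%nat -> 0 < u -> 2 * u * e_max <= 1 ->
  RsumL (boxidx N M) (fun i => Cnorm (Cmul (c i) (lam_mono e i (RtoC (1/2))))) <= A ->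
  RsumL (boxidx N M) (fun i => Cnorm (taylor_defect D i u))
  <= A * (2 * u * e_max) ^ D + RsumL (boxidx N D) (fun i => Cnorm (taylor_defect D i u)).
Proof.
  intros HDM Hu HuE HA.
  set (low := fun i => if (list_sum i <? D)%nat then Cnorm (taylor_defect D i u) else 0).
  assert (Hlow : RsumL (boxidx N M) low <= RsumL (boxidx N D) (fun i => Cnorm (taylor_defect D i u))).
  { rewrite (RsumL_boxidx_le N D M); auto.
    - apply RsumL_le; intros i _; unfold low.
      destruct (list_sum i <? D)%nat; [lra|apply Cnorm_ge0].
    - intros i Hl [k [Hk Hlt]]; pose proof (le_list_sum k i Hk); unfold low.
      destruct (Nat.ltb_spec (list_sum i) D); auto; lia. }
  assert (Hhigh : RsumL (boxidx N M) (fun i => Cnorm (Cmul (c i) (lam_mono e i (RtoC (1/2))))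
                                              * (2 * u * e_max) ^ D)
                  <= A * (2 * u * e_max) ^ D).
  { rewrite RsumL_scal_r; apply Rmult_le_compat_r; auto.
    apply pow_le; pose proof (pos_INR (list_sum e)); unfold e_max; nra. }
  eapply Rle_trans; [|apply Rplus_le_compat; [exact Hhigh|exact Hlow]].
  rewrite <- RsumL_add; apply RsumL_le; intros i Hi; pose proof (boxidx_length _ _ _ Hi).
  unfold low; destruct (Nat.ltb_spec (list_sum i) D).
  - assert (0 <= Cnorm (Cmul (c i) (lam_mono e i (RtoC (1/2)))) * (2 * u * e_max) ^ D).
    { apply Rmult_le_pos; [apply Cnorm_ge0|apply pow_le].
      pose proof (pos_INR (list_sum e)); unfold e_max; nra. }
    lra.
  - rewrite Rplus_0_r; apply taylor_defect_high; auto.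
Qed.

Lemma K_exp_expansion_bigO0 D : bigO0 D (fun u =>
  Csub (K (RtoC (exp (- u)))) (Cpsum (fun k => Cmul (expansion_coef D k) (RtoC (u ^ k))) D)).
Proof.
  destruct abs_sums_half_bounded as [A [M0 HA]].
  destruct (taylor_defect_box_bigO0 D) as [Cg [ug [Hug HCg]]].
  assert (HE : 0 <= e_max) by apply pos_INR.
  exists (A * (2 * e_max) ^ D + Cg), (Rmin ug (1 / (2 * e_max + 1))).
  split; [apply Rmin_glb_lt; auto; apply Rdiv_lt_0_compat; lra|]. intros u Hu.
  assert (Hug' : u <= ug) by (eapply Rle_trans; [apply Hu|apply Rmin_l]).
  assert (HuE : 2 * u * e_max <= 1).
  { assert (Hu2 : u <= 1 / (2 * e_max + 1)) by (eapply Rle_trans; [apply Hu|apply Rmin_r]).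
    apply (Rmult_le_compat_r (2 * e_max + 1)) in Hu2; [|lra].
    unfold Rdiv in Hu2; rewrite Rmult_assoc, Rinv_l, Rmult_1_r in Hu2 by lra; nra. }
  assert (Wz : W (RtoC (exp (- u)))).
  { apply W_nbhd; split; [apply exp_pos|rewrite <- exp_0; left; apply exp_increasing; lra]. }
  specialize (HCg u ltac:(lra)); rewrite Cnorm_RtoC in HCg.
  apply (Cseq_lim_dist_le (fun M => CsumL (boxidx N M)
           (fun i => Cmul (c i) (lam_mono e i (RtoC (exp (- u))))))); [apply K_expansion; auto|].
  exists (max M0 D); intros M HM.
  rewrite partial_expansion_defect by lia.
  eapply Rle_trans; [apply CsumL_norm|].
  eapply Rle_trans; [apply (taylor_defect_sum_le A); auto; [lia|lra|apply HA; lia]|].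
  replace ((2 * u * e_max) ^ D) with ((2 * e_max) ^ D * u ^ D)
    by (rewrite <- Rpow_mult_distr; f_equal; ring).
  pose proof (Rle_abs (RsumL (boxidx N D) (fun i => Cnorm (taylor_defect D i u)))); nra.
Qed.

(* Both [K(exp(-u))] and [sum_k b_k u^k] are [u^nu F(exp(-u))]: compare coefficients. *)
Lemma expansion_coef_taylor (F : Cplx -> Cplx) nu b D :
  (forall u, 0 < u -> K (RtoC (exp (- u))) = Cmul (Cpow (RtoC u) nu) (F (Cexp (Copp (RtoC u))))) ->
  taylor_coeffs_at0 F nu b -> forall k, (k < D)%nat -> expansion_coef D k = b k.
Proof.
  intros HK [rho [Hrho Hser]] k Hk.
  assert (H0 : Csub (expansion_coef D k) (b k) = Czero).
  { apply (bigO0_poly_coef_eq0 D (fun k => Csub (expansion_coef D k) (b k))); auto.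
    set (Phi := fun u => Cmul (Cpow u nu) (F (Cexp (Copp u)))).
    apply (bigO0_ext _ _ (fun u =>
      Cadd (Cmul (Copp Cone) (Csub (K (RtoC (exp (- u))))
                                   (Cpsum (fun k => Cmul (expansion_coef D k) (RtoC (u ^ k))) D)))
           (Csub (Phi (RtoC u)) (Cpsum (fun k => Cmul (b k) (Cpow (RtoC u) k)) D)))).
    - intros u Hu; unfold Phi; rewrite <- HK by auto.
      rewrite (Cpsum_ext (fun k => Cmul (b k) (Cpow (RtoC u) k)) (fun k => Cmul (b k) (RtoC (u ^ k))))
        by (intros; rewrite Cpow_RtoC; auto).
      rewrite (Cpsum_ext _ (fun k => Csub (Cmul (expansion_coef D k) (RtoC (u ^ k)))
                                          (Cmul (b k) (RtoC (u ^ k))))) by (intros; ring).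
      rewrite Cpsum_sub; ring.
    - apply bigO0_add; [apply bigO0_scal, K_exp_expansion_bigO0|].
      apply (power_series_bigO0 b rho); auto. }
  replace (expansion_coef D k) with (Cadd (Csub (expansion_coef D k) (b k)) (b k)) by ring.
  rewrite H0; ring.
Qed.

Lemma Delta_multi_Peval_high p i t : length i = N -> (length p < list_sum i)%nat ->
  Delta_multi e i (Peval p) t = Czero.
Proof.
  intros Hl Hi; change (Delta_multi e i (Peval p) t) with (Delta_list (combine e i) (Peval p) t).
  rewrite Delta_list_Peval; apply Cpsum_zero; intros m Hm.
  rewrite moment_lam_coef, lam_coef_combine_low by (auto; lia); ring.
Qed.

Lemma inv_fact_exp_coef m : / INR (Factorial.fact m) * / exp_coef m = (-1) ^ m.
Proof.
  unfold exp_coef.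
  assert (Hsq : (-1) ^ m * (-1) ^ m = 1)
    by (rewrite <- Rpow_mult_distr; replace (-1 * -1) with 1 by ring; apply pow1).
  assert (INR (Factorial.fact m) <> 0) by apply INR_fact_neq_0.
  assert ((-1) ^ m <> 0) by (apply pow_nonzero; lra).
  field_simplify; auto. rewrite <- Hsq at 1; field; auto.
Qed.

Lemma bernoulli_box_sum p t : let D := S (length p) in
  CsumL (boxidx N D) (fun i => Cmul (c i) (Delta_multi e i (Peval p) t))
  = Cpsum (fun m => Cmul (Cmul (RtoC ((-1) ^ m)) (Peval (Pderiv_n m p) t)) (expansion_coef D m)) D.
Proof.
  intros D.
  rewrite (CsumL_ext _ _ (fun i => Cpsum (fun m => Cmul (c i) (Cmul (Cmul (RtoC (/ INR (Factorial.fact m)))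
            (Peval (Pderiv_n m p) t)) (moment (combine e i) m))) D)).
  2:{ intros i _; change (Delta_multi e i (Peval p) t) with (Delta_list (combine e i) (Peval p) t).
      rewrite Delta_list_Peval, Cpsum_scal; reflexivity. }
  rewrite CsumL_Cpsum; apply Cpsum_ext; intros m _.
  rewrite (CsumL_ext _ _ (fun i => Cmul (Cmul (Cmul (RtoC (/ INR (Factorial.fact m)))
            (Peval (Pderiv_n m p) t)) (RtoC (/ exp_coef m))) (Cmul (c i) (lam_coef (combine e i) m))))
    by (intros; rewrite moment_lam_coef; ring).
  rewrite CsumL_scal, <- inv_fact_exp_coef, RtoC_mult; unfold expansion_coef; ring.
Qed.
End Expansion.

(** * The Bernoulli operator on polynomials *)

Lemma bernoulli_op_value_box N e c g Bg D :
  (forall i t, length i = N -> (exists k, In k i /\ (D < k)%nat) ->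
     Cmul (c i) (Delta_multi e i g t) = Czero) ->
  (forall t, CsumL (boxidx N D) (fun i => Cmul (c i) (Delta_multi e i g t)) = Bg t) ->
  bernoulli_op_value N e c g Bg.
Proof.
  intros Hoff Hbox t0 _; exists 1; split; [lra|split].
  - intros eps Heps; exists D; intros M t HM _.
    rewrite (RsumL_boxidx_le N D M); auto; [lra|].
    intros i Hl Hi; rewrite Hoff; auto; apply Cnorm_zero.
  - intros t _ eps Heps; exists D; intros M HM.
    rewrite (CsumL_boxidx_le N D M), Hbox; auto.
    replace (Csub (Bg t) (Bg t)) with Czero by ring; rewrite Cnorm_zero; lra.
Qed.

Lemma Cln_RtoC y : 0 < y -> Cln (RtoC y) = RtoC (ln y).
Proof.
  intros Hy; unfold Cln; rewrite Cnorm_RtoC, Rabs_pos_eq by lra; unfold RtoC at 2; f_equal.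
  unfold Carg; simpl; destruct (Rlt_dec 0 y); [|lra].
  unfold Rdiv; rewrite Rmult_0_l; apply atan_0.
Qed.

Lemma Cexp_opp_RtoC u : Cexp (Copp (RtoC u)) = RtoC (exp (- u)).
Proof.
  unfold Cexp, Copp, RtoC; simpl; rewrite Ropp_0, cos_0, sin_0, Rmult_1_r, Rmult_0_r; reflexivity.
Qed.

(* On [(0,1)] the expansion is [(-ln z)^nu F z], which at [z = exp(-u)] is [u^nu F(exp(-u))]. *)
Lemma K_exp_neg (W : Cplx -> Prop) (K F : Cplx -> Cplx) nu : nbhd_0_1 W ->
  (forall z, W z -> z <> Cone -> K z = Cmul (Cpow (RtoC (-1)) nu) (Cmul (Cpow (Cln z) nu) (F z))) ->
  forall u, 0 < u -> K (RtoC (exp (- u))) = Cmul (Cpow (RtoC u) nu) (F (Cexp (Copp (RtoC u)))).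
Proof.
  intros HW HK u Hu.
  assert (He1 : exp (- u) < 1) by (rewrite <- exp_0; apply exp_increasing; lra).
  rewrite HK.
  - rewrite Cln_RtoC, ln_exp, Cexp_opp_RtoC, !Cpow_RtoC by apply exp_pos.
    replace (Cmul (RtoC ((-1) ^ nu)) (Cmul (RtoC ((- u) ^ nu)) (F (RtoC (exp (- u))))))
      with (Cmul (RtoC ((-1) ^ nu * (- u) ^ nu)) (F (RtoC (exp (- u))))) by (rewrite RtoC_mult; ring).
    rewrite <- Rpow_mult_distr; replace (-1 * - u) with u by ring; reflexivity.
  - apply HW; split; [apply exp_pos|lra].
  - intros Heq; injection Heq; lra.
Qed.

Theorem mainTheorem4 :
  forall (a : nat -> Cplx) (F : Cplx -> Cplx) (nu : nat) (r : R) (L : Cplx),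
    tame_data a F nu r L ->
  forall (N : nat) (e : list nat) (c : list nat -> Cplx) (W : Cplx -> Prop) (K : Cplx -> Cplx),
    exponent_vector N e ->
    nbhd_0_1 W ->
    (forall z, W z -> in_disk z \/ in_ball1 r z) ->
    multi_conv_abs_unif N (fun i z => Cmul (c i) (lam_mono e i z)) W K ->
    (forall z, W z -> z <> Cone ->
       K z = Cmul (Cpow (RtoC (-1)) nu) (Cmul (Cpow (Cln z) nu) (F z))) ->
  forall b : nat -> Cplx, taylor_coeffs_at0 F nu b ->
  forall p : list Cplx,
    in_bernoulli_domain N e c (Peval p) /\
    bernoulli_op_value N e c (Peval p) (todd_op b p).
Proof.
  (* Tameness only guarantees that an expansion [K] exists; the proof never uses it. *)
  intros a F nu r L _ N e c W K He HW _ HKexp HK b Hb p.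
  assert (Hval : bernoulli_op_value N e c (Peval p) (todd_op b p)).
  { apply (bernoulli_op_value_box N e c _ _ (S (length p))).
    - intros i t Hl [k [Hk Hlt]]; pose proof (le_list_sum k i Hk).
      rewrite (Delta_multi_Peval_high N e He); [ring|auto|lia].
    - intros t; rewrite (bernoulli_box_sum N e c); unfold todd_op; apply Cpsum_ext; intros m Hm.
      rewrite (expansion_coef_taylor N e c W K He HW HKexp F nu b);
        [|apply (K_exp_neg W); auto|auto|auto].
      rewrite Cpow_RtoC; ring. }
  split; [exists (todd_op b p)|]; exact Hval.
Qed.
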